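(* Fix $\beta=(\beta_1,\beta_2)\in\mathbb{R}^2$ with $\beta_1>\beta_2$. Let $P_\sigma:=\{(S_1,S_2)\in\mathbb{R}^2: S_1+S_2\le 1\}$, $I:=1-S_1-S_2$, $\mathcal{P}:=\{(X,I)\in\mathbb{R}^2: I\ge 0\}$, and $\varphi_\beta:P_\sigma\to\mathcal{P}$, $\varphi_\beta(S_1,S_2)=(\beta_1S_1+\beta_2S_2,\;1-S_1-S_2)$. For smooth functions $\Omega_1,\Omega_2:P_\sigma\to\mathbb{R}$ and reals $\gamma_1,\gamma_2$ with $\gamma_1+\gamma_2=1$, let $F_{(\Omega,\gamma)}$ be the vector field on $P_\sigma$ given by $$\dot S_1=-\beta_1S_1I-\Omega_1S_1+\Omega_2S_2+\gamma_1 I,\qquad \dot S_2=-\beta_2S_2I+\Omega_1S_1-\Omega_2S_2+\gamma_2 I .$$ For $f\in C^\infty(\mathcal{P})$ let $V_f:=f\,\partial_X+(X-1)I\,\partial_I$ (i.e. the system $\dot X=f(X,I)$, $\dot I=(X-1)I$). Then: (i) For every such $(\Omega,\gamma)$ one has $(\varphi_\beta)_*F_{(\Omega,\gamma)}=V_f$, where $$f(X,I)=\lambda I+(1-I)P(X,I)+XQ(X,I),\quad \lambda=\beta_1\gamma_1+\beta_2\gamma_2,$$ $$P=(\beta_1\Omega_2+\beta_2\Omega_1+\beta_1\beta_2 I)\circ\varphi_\beta^{-1},\qquad Q=-(\Omega_1+\Omega_2+(\beta_1+\beta_2)I)\circ\varphi_\beta^{-1}.$$ (ii) The assignment $F_{(\Omega,\gamma)}\mapsto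 f$ is a bijection from the set of all vector fields $F_{(\Omega,\gamma)}$ (for this fixed $\beta$, all smooth $\Omega_1,\Omega_2$ and all $\gamma_1+\gamma_2=1$) onto $C^\infty(\mathcal{P})$. (iii) For every $f\in C^\infty(\mathcal{P})$ put $\lambda_f:=f(0,1)$, $Q_f(X,I):=(f(X,I)-f(0,I))/X$, $P_f(I):=(f(0,I)-f(0,1)I)/(1-I)$ (smoothly extended to $X=0$, resp. $I=1$). Then there is exactly one pair $(\Omega,\gamma)$ with $\gamma_1+\gamma_2=1$ such that $(\beta_1\Omega_2+\beta_2\Omega_1+\beta_1\beta_2I)\circ\varphi_\beta^{-1}$ does not depend on $X$ and $(\varphi_\beta)_*F_{(\Omega,\gamma)}=V_f$; it is given by $$\Omega_1=\frac{P_f+\beta_1Q_f+\beta_1^2I}{\beta_2-\beta_1}\circ\varphi_\beta,\quad \Omega_2=\frac{P_f+\beta_2Q_f+\beta_2^2I}{\beta_1-\beta_2}\circ\varphi_\beta,\quad \gamma_1=\frac{\lambda_f-\beta_2}{\beta_1-\beta_2},\ \gamma_2=\frac{\beta_1-\lambda_f}{\beta_1-\beta_2}.$$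
   Context: $(\varphi_\beta)_*F$ denotes the push-forward $D\varphi_\beta\circ F\circ\varphi_\beta^{-1}$ of a vector field $F$. The system $F_{(\Omega,\gamma)}$ is the ''SSISS model'' (two susceptible compartments $S_1,S_2$, one infectious compartment $I$, recovery rate normalized to $1$), and $X=\beta_1S_1+\beta_2S_2$ is the replacement number; the system $V_f$ is called a replacement number dynamics (RND). *)

From Stdlib Require Import Reals.
From Coquelicot Require Import Coquelicot.
Open Scope R_scope.

Definition dX (g : R -> R -> R) : R -> R -> R :=
  fun x y => Derive (fun t => g t y) x.
Definition dY (g : R -> R -> R) : R -> R -> R :=
  fun x y => Derive (fun t => g x t) y.

Definition cont2 (g : R -> R -> R) : Prop :=
  forall p : R * R, continuous (fun q : R * R => g (fst q) (snd q)) p.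

Fixpoint Ck (n : nat) (g : R -> R -> R) : Prop :=
  match n with
  | O => cont2 g
  | S m =>
      (forall x y, ex_derive (fun t => g t y) x /\ ex_derive (fun t => g x t) y)
      /\ Ck m (dX g) /\ Ck m (dY g) /\ cont2 g
  end.

Definition smooth (g : R -> R -> R) : Prop := forall n, Ck n g.

Definition smooth_on (D : R -> R -> Prop) (g : R -> R -> R) : Prop :=
  exists h, smooth h /\ forall x y, D x y -> g x y = h x y.

Definition eq_on (D : R -> R -> Prop) {T : Type} (g h : R -> R -> T) : Prop :=
  forall x y, D x y -> g x y = h x y.

Definition Psigma (S1 S2 : R) : Prop := S1 + S2 <= 1.
Definition Pcal (X I : R) : Prop := 0 <= I.

Definition phi (b1 b2 : R) (S1 S2 : R) : R * R :=
  (b1 * S1 + b2 * S2, 1 - S1 - S2).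

Definition phi_inv (b1 b2 : R) (X I : R) : R * R :=
  ((X - b2 * (1 - I)) / (b1 - b2), (b1 * (1 - I) - X) / (b1 - b2)).

Definition vfield := R -> R -> R * R.

(* (phi_beta)_* F = D phi o F o phi^{-1}, with the differential D phi (p) v
   computed as the directional derivative d/dt phi(p + t v) at t = 0. *)
Definition push (b1 b2 : R) (F : vfield) : vfield :=
  fun X I =>
    let p := phi_inv b1 b2 X I in
    let v := F (fst p) (snd p) in
    (Derive (fun t => fst (phi b1 b2 (fst p + t * fst v) (snd p + t * snd v))) 0,
     Derive (fun t => snd (phi b1 b2 (fst p + t * fst v) (snd p + t * snd v))) 0).

Definition Ffield (b1 b2 : R) (Om1 Om2 : R -> R -> R) (g1 g2 : R) : vfield :=
  fun S1 S2 =>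
    let I := 1 - S1 - S2 in
    (- b1 * S1 * I - Om1 S1 S2 * S1 + Om2 S1 S2 * S2 + g1 * I,
     - b2 * S2 * I + Om1 S1 S2 * S1 - Om2 S1 S2 * S2 + g2 * I).

Definition Vfield (f : R -> R -> R) : vfield :=
  fun X I => (f X I, (X - 1) * I).

Definition admissible (Om1 Om2 : R -> R -> R) (g1 g2 : R) : Prop :=
  smooth_on Psigma Om1 /\ smooth_on Psigma Om2 /\ g1 + g2 = 1.

Definition lam_of (b1 b2 g1 g2 : R) : R := b1 * g1 + b2 * g2.

Definition P_of (b1 b2 : R) (Om1 Om2 : R -> R -> R) : R -> R -> R :=
  fun X I => let p := phi_inv b1 b2 X I in
    b1 * Om2 (fst p) (snd p) + b2 * Om1 (fst p) (snd p)
    + b1 * b2 * (1 - fst p - snd p).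

Definition Q_of (b1 b2 : R) (Om1 Om2 : R -> R -> R) : R -> R -> R :=
  fun X I => let p := phi_inv b1 b2 X I in
    - (Om1 (fst p) (snd p) + Om2 (fst p) (snd p) + (b1 + b2) * (1 - fst p - snd p)).

Definition f_of (b1 b2 : R) (Om1 Om2 : R -> R -> R) (g1 g2 : R) : R -> R -> R :=
  fun X I => lam_of b1 b2 g1 g2 * I + (1 - I) * P_of b1 b2 Om1 Om2 X I
             + X * Q_of b1 b2 Om1 Om2 X I.

Definition lam_f (f : R -> R -> R) : R := f 0 1.

(* (f(X,I) - f(0,I))/X, extended at X = 0 by its limit d_X f(0,I) *)
Definition Q_f (f : R -> R -> R) (X I : R) : R :=
  if Req_EM_T X 0 then dX f 0 I else (f X I - f 0 I) / X.

(* (f(0,I) - f(0,1) I)/(1-I), extended at I = 1 by its limit f(0,1) - d_I f(0,1) *)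
Definition P_f (f : R -> R -> R) (I : R) : R :=
  if Req_EM_T I 1 then f 0 1 - dY f 0 1 else (f 0 I - f 0 1 * I) / (1 - I).

Definition Om1_f (b1 b2 : R) (f : R -> R -> R) : R -> R -> R :=
  fun S1 S2 => let q := phi b1 b2 S1 S2 in
    (P_f f (snd q) + b1 * Q_f f (fst q) (snd q) + b1 ^ 2 * snd q) / (b2 - b1).

Definition Om2_f (b1 b2 : R) (f : R -> R -> R) : R -> R -> R :=
  fun S1 S2 => let q := phi b1 b2 S1 S2 in
    (P_f f (snd q) + b2 * Q_f f (fst q) (snd q) + b2 ^ 2 * snd q) / (b1 - b2).

Definition g1_f (b1 b2 : R) (f : R -> R -> R) : R := (lam_f f - b2) / (b1 - b2).
Definition g2_f (b1 b2 : R) (f : R -> R -> R) : R := (b1 - lam_f f) / (b1 - b2).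

Definition P_indep_X (b1 b2 : R) (Om1 Om2 : R -> R -> R) : Prop :=
  forall X X' I, Pcal X I -> P_of b1 b2 Om1 Om2 X I = P_of b1 b2 Om1 Om2 X' I.

(* Since phi_beta is an affine bijection from P_sigma onto Pcal, its differential is its
   linear part, so the push-forward of F is (b1 F1 + b2 F2, -(F1 + F2)) read through phi_beta^-1;
   substituting F_(Omega,gamma) gives V_f with f = lambda I + (1 - I) P + X Q, and injectivity of
   the push-forward gives injectivity of F |-> f.  Conversely P and Q determine Omega through an
   invertible linear system, so f is realised by choosing (P, Q) = (P_f, Q_f): both are smooth by
   Hadamard's lemma g(x,y)/x = int_0^1 d_x g(tx,y) dt for g(0,y) = 0 together with
   differentiation under the integral sign.  If P does not depend on X, the decomposition of f
   forces Q = Q_f (divide by X, or differentiate at X = 0) and P = P_f (set X = 0, then divide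
   by 1 - I or differentiate at I = 1), which is the uniqueness in (iii). *)

From Stdlib Require Import Reals Lra FunctionalExtensionality.
From Coquelicot Require Import Coquelicot.
Open Scope R_scope.

Lemma cont2_continuity_2d (g : R -> R -> R) :
  cont2 g <-> forall x y, continuity_2d_pt g x y.
Proof.
  split.
  - intros Hg x y. apply continuity_2d_pt_filterlim, (Hg (x, y)).
  - intros Hg [x y]. apply continuity_2d_pt_filterlim, Hg.
Qed.

Lemma cont2_comp {U : UniformSpace} (g : R -> R -> R) (u v : U -> R) (p : U) :
  cont2 g -> continuous u p -> continuous v p -> continuous (fun q => g (u q) (v q)) p.
Proof. intros Hg Hu Hv. apply continuous_comp_2; auto. Qed.

Lemma Ck_cont2 n g : Ck n g -> cont2 g.
Proof. destruct n; simpl; tauto. Qed.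

Lemma Ck_pred n : forall g, Ck (S n) g -> Ck n g.
Proof.
  induction n as [|n IHn]; intros g Hg; [exact (proj2 (proj2 (proj2 Hg)))|].
  destruct Hg as (Hex & HdX & HdY & Hc).
  split; [exact Hex | split; [apply IHn, HdX | split; [apply IHn, HdY | exact Hc]]].
Qed.

Lemma Ck_ext n (g h : R -> R -> R) : (forall x y, g x y = h x y) -> Ck n g -> Ck n h.
Proof.
  intros E. replace h with g; [auto|].
  do 2 (apply functional_extensionality; intro). apply E.
Qed.

Lemma smooth_ext (g h : R -> R -> R) : (forall x y, g x y = h x y) -> smooth g -> smooth h.
Proof. intros E Hg n. exact (Ck_ext n g h E (Hg n)). Qed.

Lemma smooth_cont2 g : smooth g -> cont2 g.
Proof. intros Hg. exact (Hg O). Qed.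

Lemma smooth_ex_derive g : smooth g -> forall x y,
  ex_derive (fun t => g t y) x /\ ex_derive (fun t => g x t) y.
Proof. intros Hg. exact (proj1 (Hg 1%nat)). Qed.

Lemma smooth_dX g : smooth g -> smooth (dX g).
Proof. intros Hg n. exact (proj1 (proj2 (Hg (S n)))). Qed.

Lemma smooth_dY g : smooth g -> smooth (dY g).
Proof. intros Hg n. exact (proj1 (proj2 (proj2 (Hg (S n))))). Qed.

Lemma is_derive_dX g x y : smooth g -> is_derive (fun t => g t y) x (dX g x y).
Proof. intros Hg. apply Derive_correct. exact (proj1 (smooth_ex_derive g Hg x y)). Qed.

Lemma is_derive_dY g x y : smooth g -> is_derive (fun t => g x t) y (dY g x y).
Proof. intros Hg. apply Derive_correct. exact (proj2 (smooth_ex_derive g Hg x y)). Qed.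

Lemma Ck_ex_diff_n n : forall g, Ck n g -> forall x y, ex_diff_n g n x y.
Proof.
  induction n as [|n IHn]; intros g Hg x y.
  - split; [apply cont2_continuity_2d, Hg | exact I].
  - destruct Hg as (Hex & HdX & HdY & Hc).
    simpl. split; [apply cont2_continuity_2d, Hc|].
    split; [apply (Hex x y)|]. split; [apply (Hex x y)|].
    split; apply IHn; assumption.
Qed.

Lemma smooth_differentiable g x y : smooth g ->
  differentiable_pt_lim g x y (dX g x y) (dY g x y).
Proof.
  intros Hg.
  destruct (Taylor_Lagrange_2d g 1 x y) as [D [d HD]].
  { exists (mkposreal 1 Rlt_0_1). intros u v _ _. apply Ck_ex_diff_n, Hg. }
  intros eps.
  assert (HD0 : 0 < Rabs D + 1) by (pose proof (Rabs_pos D); lra).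
  assert (Hr : 0 < eps / (Rabs D + 1)) by (apply Rdiv_lt_0_compat; [apply cond_pos | exact HD0]).
  exists (mkposreal _ (Rmin_pos _ _ (cond_pos d) Hr)).
  intros u v Hu Hv. simpl in Hu, Hv.
  specialize (HD u v (Rlt_le_trans _ _ _ Hu (Rmin_l _ _)) (Rlt_le_trans _ _ _ Hv (Rmin_l _ _))).
  set (m := Rmax (Rabs (u - x)) (Rabs (v - y))) in *.
  assert (Hpol : DL_pol 1 g x y (u - x) (v - y)
                 = g x y + (dX g x y * (u - x) + dY g x y * (v - y))).
  { unfold DL_pol, differential, partial_derive, Binomial.C, dX, dY. simpl. field. }
  rewrite Hpol in HD.
  (* the Taylor-Lagrange remainder is at most D m^2, which is below eps m once m (|D| + 1) <= eps *)
  assert (Hm0 : 0 <= m) by (eapply Rle_trans; [apply Rabs_pos | apply Rmax_l]).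
  assert (Hm : m * (Rabs D + 1) <= eps).
  { assert (Hlt : m < eps / (Rabs D + 1)).
    { apply Rmax_lub_lt; eapply Rlt_le_trans; eauto; apply Rmin_r. }
    apply Rlt_le. apply (Rmult_lt_compat_r (Rabs D + 1)) in Hlt; [|exact HD0].
    unfold Rdiv in Hlt. rewrite Rmult_assoc, Rinv_l in Hlt; lra. }
  replace (g u v - g x y - (dX g x y * (u - x) + dY g x y * (v - y)))
    with (g u v - (g x y + (dX g x y * (u - x) + dY g x y * (v - y)))) by ring.
  eapply Rle_trans; [exact HD|].
  pose proof (Rle_abs D). pose proof (Rabs_pos D). nra.
Qed.

Lemma Ck_const n : forall c, Ck n (fun _ _ => c).
Proof.
  induction n as [|n IHn]; intros c.
  - intros p. apply continuous_const.
  - split; [|split; [|split]].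
    + intros; split; apply ex_derive_const.
    + apply (Ck_ext n (fun _ _ => 0)); [|apply IHn].
      intros; unfold dX; rewrite Derive_const; reflexivity.
    + apply (Ck_ext n (fun _ _ => 0)); [|apply IHn].
      intros; unfold dY; rewrite Derive_const; reflexivity.
    + intros p. apply continuous_const.
Qed.

Lemma Ck_fst n : Ck n (fun x _ => x).
Proof.
  destruct n.
  - intros [x y]. apply continuous_fst.
  - split; [|split; [|split]].
    + intros; split; [apply ex_derive_id | apply ex_derive_const].
    + apply (Ck_ext n (fun _ _ => 1)); [|apply Ck_const].
      intros; unfold dX; rewrite Derive_id; reflexivity.
    + apply (Ck_ext n (fun _ _ => 0)); [|apply Ck_const].
      intros; unfold dY; rewrite Derive_const; reflexivity.
    + intros [x y]. apply continuous_fst.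
Qed.

Lemma Ck_snd n : Ck n (fun _ y => y).
Proof.
  destruct n.
  - intros [x y]. apply continuous_snd.
  - split; [|split; [|split]].
    + intros; split; [apply ex_derive_const | apply ex_derive_id].
    + apply (Ck_ext n (fun _ _ => 0)); [|apply Ck_const].
      intros; unfold dX; rewrite Derive_const; reflexivity.
    + apply (Ck_ext n (fun _ _ => 1)); [|apply Ck_const].
      intros; unfold dY; rewrite Derive_id; reflexivity.
    + intros [x y]. apply continuous_snd.
Qed.

Lemma Ck_plus n : forall u v, Ck n u -> Ck n v -> Ck n (fun x y => u x y + v x y).
Proof.
  induction n as [|n IHn]; intros u v Hu Hv.
  - intros p. apply (continuous_plus (fun q : R * R => u (fst q) (snd q))); auto.
  - destruct Hu as (Hu1 & Hu2 & Hu3 & Hu4), Hv as (Hv1 & Hv2 & Hv3 & Hv4).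
    split; [|split; [|split]].
    + intros x y. destruct (Hu1 x y), (Hv1 x y).
      split; apply (ex_derive_plus (V := R_NormedModule)); auto.
    + eapply Ck_ext; [|exact (IHn _ _ Hu2 Hv2)].
      intros x y. unfold dX. destruct (Hu1 x y), (Hv1 x y).
      rewrite Derive_plus; auto.
    + eapply Ck_ext; [|exact (IHn _ _ Hu3 Hv3)].
      intros x y. unfold dY. destruct (Hu1 x y), (Hv1 x y).
      rewrite Derive_plus; auto.
    + intros p. apply (continuous_plus (fun q : R * R => u (fst q) (snd q))); auto.
Qed.

Lemma Ck_mult n : forall u v, Ck n u -> Ck n v -> Ck n (fun x y => u x y * v x y).
Proof.
  induction n as [|n IHn]; intros u v Hu Hv.
  - intros p. apply (continuous_mult (fun q : R * R => u (fst q) (snd q))); auto.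
  - pose proof (Ck_pred _ _ Hu) as Hu'. pose proof (Ck_pred _ _ Hv) as Hv'.
    destruct Hu as (Hu1 & Hu2 & Hu3 & Hu4), Hv as (Hv1 & Hv2 & Hv3 & Hv4).
    split; [|split; [|split]].
    + intros x y. destruct (Hu1 x y), (Hv1 x y). split; apply ex_derive_mult; auto.
    + eapply Ck_ext; [|exact (Ck_plus n _ _ (IHn _ _ Hu2 Hv') (IHn _ _ Hu' Hv2))].
      intros x y. unfold dX. destruct (Hu1 x y), (Hv1 x y).
      rewrite Derive_mult; auto.
    + eapply Ck_ext; [|exact (Ck_plus n _ _ (IHn _ _ Hu3 Hv') (IHn _ _ Hu' Hv3))].
      intros x y. unfold dY. destruct (Hu1 x y), (Hv1 x y).
      rewrite (Derive_mult (fun t => u x t)); auto.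
    + intros p. apply (continuous_mult (fun q : R * R => u (fst q) (snd q))); auto.
Qed.

Lemma smooth_const c : smooth (fun _ _ => c).
Proof. intros n. apply Ck_const. Qed.

Lemma smooth_fst : smooth (fun x _ => x).
Proof. intros n. apply Ck_fst. Qed.

Lemma smooth_snd : smooth (fun _ y => y).
Proof. intros n. apply Ck_snd. Qed.

Lemma smooth_plus u v : smooth u -> smooth v -> smooth (fun x y => u x y + v x y).
Proof. intros Hu Hv n. apply Ck_plus; auto. Qed.

Lemma smooth_mult u v : smooth u -> smooth v -> smooth (fun x y => u x y * v x y).
Proof. intros Hu Hv n. apply Ck_mult; auto. Qed.

Lemma smooth_opp u : smooth u -> smooth (fun x y => - u x y).
Proof.
  intros Hu. apply (smooth_ext (fun x y => -1 * u x y)); [intros; ring|].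
  apply smooth_mult; [apply smooth_const | exact Hu].
Qed.

Lemma smooth_minus u v : smooth u -> smooth v -> smooth (fun x y => u x y - v x y).
Proof. intros Hu Hv. apply smooth_plus, smooth_opp; assumption. Qed.

Lemma smooth_div_const u c : smooth u -> smooth (fun x y => u x y / c).
Proof. intros Hu. apply smooth_mult; [exact Hu | apply smooth_const]. Qed.

Lemma continuous_affine a b c (p : R * R) :
  continuous (fun q : R * R => a * fst q + b * snd q + c) p.
Proof.
  destruct p as [x y].
  apply (continuous_plus (fun q : R * R => a * fst q + b * snd q)); [|apply continuous_const].
  apply (continuous_plus (fun q : R * R => a * fst q)).
  - apply (continuous_mult (fun _ : R * R => a)); [apply continuous_const | apply continuous_fst].
  - apply (continuous_mult (fun _ : R * R => b)); [apply continuous_const | apply continuous_snd].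
Qed.

Lemma is_derive_comp_line g a c d e t : smooth g ->
  is_derive (fun s => g (a * s + c) (d * s + e)) t
    (a * dX g (a * t + c) (d * t + e) + d * dY g (a * t + c) (d * t + e)).
Proof.
  intros Hg. apply is_derive_Reals.
  replace (a * dX g (a * t + c) (d * t + e) + d * dY g (a * t + c) (d * t + e))
    with (dX g (a * t + c) (d * t + e) * a + dY g (a * t + c) (d * t + e) * d) by ring.
  apply (derivable_pt_lim_comp_2d g (fun s => a * s + c) (fun s => d * s + e)).
  - apply smooth_differentiable, Hg.
  - apply is_derive_Reals. auto_derive; auto; ring.
  - apply is_derive_Reals. auto_derive; auto; ring.
Qed.

Lemma smooth_comp_affine a b c d e f g : smooth g ->
  smooth (fun x y => g (a * x + b * y + c) (d * x + e * y + f)).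
Proof.
  intros Hg n. revert g Hg. induction n as [|n IHn]; intros g Hg.
  - intros p. apply (cont2_comp g); [apply smooth_cont2, Hg | apply continuous_affine ..].
  - set (precomp := fun (h : R -> R -> R) x y => h (a * x + b * y + c) (d * x + e * y + f)).
    assert (Dx : forall x y, is_derive (fun s => precomp g s y) x
                   (a * precomp (dX g) x y + d * precomp (dY g) x y)).
    { intros x y. unfold precomp.
      replace (a * x + b * y + c) with (a * x + (b * y + c)) by ring.
      replace (d * x + e * y + f) with (d * x + (e * y + f)) by ring.
      apply (is_derive_ext (fun s => g (a * s + (b * y + c)) (d * s + (e * y + f))));
        [intros; f_equal; ring|].
      apply is_derive_comp_line, Hg. }
    assert (Dy : forall x y, is_derive (fun s => precomp g x s) y
                   (b * precomp (dX g) x y + e * precomp (dY g) x y)).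
    { intros x y. unfold precomp.
      replace (a * x + b * y + c) with (b * y + (a * x + c)) by ring.
      replace (d * x + e * y + f) with (e * y + (d * x + f)) by ring.
      apply (is_derive_ext (fun s => g (b * s + (a * x + c)) (e * s + (d * x + f))));
        [intros; f_equal; ring|].
      apply is_derive_comp_line, Hg. }
    assert (Hlin : forall k l, Ck n (fun x y => k * precomp (dX g) x y + l * precomp (dY g) x y)).
    { intros k l. apply Ck_plus; apply Ck_mult; try apply Ck_const; apply IHn.
      - apply smooth_dX, Hg.
      - apply smooth_dY, Hg. }
    split; [|split; [|split]].
    + intros x y. split; eexists; [apply Dx | apply Dy].
    + eapply Ck_ext; [|apply (Hlin a d)].
      intros x y. symmetry. apply is_derive_unique, Dx.
    + eapply Ck_ext; [|apply (Hlin b e)].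
      intros x y. symmetry. apply is_derive_unique, Dy.
    + apply (Ck_cont2 n), IHn, Hg.
Qed.

Definition radial_integral (k : nat) (H : R -> R -> R) (x y : R) : R :=
  RInt (fun t => t ^ k * H (t * x) y) 0 1.

Lemma continuous_radial_integrand k H x y t : cont2 H ->
  continuous (fun s => s ^ k * H (s * x) y) t.
Proof.
  intros HH. apply (continuous_mult (fun s => s ^ k)).
  - apply (ex_derive_continuous (fun s => s ^ k)). auto_derive. exact I.
  - apply (cont2_comp H); [exact HH | | apply continuous_const].
    apply (ex_derive_continuous (fun s => s * x)). auto_derive. exact I.
Qed.

Lemma ex_RInt_radial_integrand k H x y : cont2 H ->
  ex_RInt (fun t => t ^ k * H (t * x) y) 0 1.
Proof.
  intros HH. apply (ex_RInt_continuous (V := R_CompleteNormedModule)).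
  intros t _. apply continuous_radial_integrand, HH.
Qed.

Lemma cont2_radial_integral k H : cont2 H -> cont2 (radial_integral k H).
Proof.
  intros HH. apply cont2_continuity_2d. intros x0 y0 eps.
  set (A := Rabs x0 + 1).
  assert (He2 : 0 < eps / 2) by (pose proof (cond_pos eps); lra).
  destruct (uniform_continuity_2d H (- A) A (y0 - 1) (y0 + 1)
              (fun x y _ _ => proj1 (cont2_continuity_2d H) HH x y) (mkposreal _ He2))
    as [delta Hd].
  exists (mkposreal _ (Rmin_pos _ _ (cond_pos delta) Rlt_0_1)).
  intros u v Hu Hv. simpl in Hu, Hv.
  pose proof (Rmin_l delta 1). pose proof (Rmin_r delta 1).
  assert (HuA : Rabs u <= A) by (unfold A; pose proof (Rabs_triang_inv u x0); lra).
  assert (Hvy : y0 - 1 <= v <= y0 + 1) by (apply Rabs_le_between'; lra).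
  assert (Hy : y0 - 1 <= y0 <= y0 + 1) by lra.
  assert (Hpt : forall t z, 0 <= t <= 1 -> Rabs z <= A -> - A <= t * z <= A).
  { intros t z Ht Hz. apply Rabs_le_between. rewrite Rabs_mult, (Rabs_pos_eq t) by lra.
    pose proof (Rabs_pos z). nra. }
  unfold radial_integral.
  rewrite <- (RInt_minus (V := R_CompleteNormedModule));
    try apply ex_RInt_radial_integrand; auto.
  eapply Rle_lt_trans.
  - apply (abs_RInt_le_const _ 0 1 (eps / 2)); [lra | |].
    + apply (ex_RInt_minus (V := R_NormedModule)); apply ex_RInt_radial_integrand, HH.
    + intros t Ht. unfold minus, plus, opp; simpl.
      replace (t ^ k * H (t * u) v + - (t ^ k * H (t * x0) y0))
        with (t ^ k * (H (t * u) v - H (t * x0) y0)) by ring.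
      rewrite Rabs_mult.
      assert (Htk : Rabs (t ^ k) <= 1).
      { rewrite Rabs_pos_eq by (apply pow_le; lra).
        rewrite <- (pow1 k). apply pow_incr. lra. }
      assert (Hdiff : Rabs (H (t * u) v - H (t * x0) y0) < eps / 2).
      { apply Hd; auto.
        - apply Hpt; [exact Ht | unfold A; lra].
        - rewrite <- Rmult_minus_distr_l, Rabs_mult, (Rabs_pos_eq t) by lra.
          pose proof (Rabs_pos (u - x0)). nra.
        - lra. }
      pose proof (Rabs_pos (t ^ k)). pose proof (Rabs_pos (H (t * u) v - H (t * x0) y0)). nra.
  - pose proof (cond_pos eps). lra.
Qed.

Lemma is_derive_radial_integral_x k H x y : smooth H ->
  is_derive (fun s => radial_integral k H s y) x (radial_integral (S k) (dX H) x y).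
Proof.
  intros HH.
  assert (D : forall t s, is_derive (fun z => t ^ k * H (t * z) y) s
                            (t ^ S k * dX H (t * s) y)).
  { intros t s. replace (t ^ S k * dX H (t * s) y) with (t ^ k * (t * dX H (t * s) y))
      by (simpl; ring).
    apply is_derive_scal.
    apply (is_derive_comp (fun z => H z y) (fun z => t * z)).
    - apply is_derive_dX, HH.
    - auto_derive; [exact I | ring]. }
  unfold radial_integral.
  rewrite (RInt_ext _ (fun t => Derive (fun z => t ^ k * H (t * z) y) x))
    by (intros t _; symmetry; apply is_derive_unique, D).
  apply (is_derive_RInt_param (fun s t => t ^ k * H (t * s) y)).
  - apply filter_forall. intros s t _. eexists. apply D.
  - intros t _. apply continuity_2d_pt_ext with (fun s u => u ^ S k * dX H (u * s) y).
    { intros s u. symmetry. apply is_derive_unique, D. }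
    apply continuity_2d_pt_filterlim.
    apply (continuous_mult (fun q : R * R => snd q ^ S k)).
    + apply (continuous_comp (fun q : R * R => snd q) (fun s => s ^ S k)).
      * apply continuous_snd.
      * apply (ex_derive_continuous (fun s => s ^ S k)). auto_derive. exact I.
    + apply (cont2_comp (dX H)); [apply smooth_cont2, smooth_dX, HH | | apply continuous_const].
      apply (continuous_mult (fun q : R * R => snd q)); [apply continuous_snd | apply continuous_fst].
  - apply filter_forall. intros s. apply ex_RInt_radial_integrand, smooth_cont2, HH.
Qed.

Lemma is_derive_radial_integral_y k H x y : smooth H ->
  is_derive (fun s => radial_integral k H x s) y (radial_integral k (dY H) x y).
Proof.
  intros HH.
  assert (D : forall t s, is_derive (fun z => t ^ k * H (t * x) z) s (t ^ k * dY H (t * x) s)).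
  { intros t s. apply is_derive_scal, is_derive_dY, HH. }
  unfold radial_integral.
  rewrite (RInt_ext _ (fun t => Derive (fun z => t ^ k * H (t * x) z) y))
    by (intros t _; symmetry; apply is_derive_unique, D).
  apply (is_derive_RInt_param (fun s t => t ^ k * H (t * x) s)).
  - apply filter_forall. intros s t _. eexists. apply D.
  - intros t _. apply continuity_2d_pt_ext with (fun s u => u ^ k * dY H (u * x) s).
    { intros s u. symmetry. apply is_derive_unique, D. }
    apply continuity_2d_pt_filterlim.
    apply (continuous_mult (fun q : R * R => snd q ^ k)).
    + apply (continuous_comp (fun q : R * R => snd q) (fun s => s ^ k)).
      * apply continuous_snd.
      * apply (ex_derive_continuous (fun s => s ^ k)). auto_derive. exact I.
    + apply (cont2_comp (dY H)); [apply smooth_cont2, smooth_dY, HH | | apply continuous_fst].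
      apply (continuous_mult (fun q : R * R => snd q)); [apply continuous_snd | apply continuous_const].
  - apply filter_forall. intros s. apply ex_RInt_radial_integrand, smooth_cont2, HH.
Qed.

(* The weight t^k absorbs the factor t produced by differentiating H (t x) y in x. *)
Lemma smooth_radial_integral k H : smooth H -> smooth (radial_integral k H).
Proof.
  intros HH n. revert k H HH. induction n as [|n IHn]; intros k H HH.
  - apply cont2_radial_integral, smooth_cont2, HH.
  - split; [|split; [|split]].
    + intros x y. split; eexists;
        [apply is_derive_radial_integral_x | apply is_derive_radial_integral_y]; exact HH.
    + eapply Ck_ext; [|apply (IHn (S k) (dX H)), smooth_dX, HH].
      intros x y. symmetry. apply is_derive_unique, is_derive_radial_integral_x, HH.
    + eapply Ck_ext; [|apply (IHn k (dY H)), smooth_dY, HH].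
      intros x y. symmetry. apply is_derive_unique, is_derive_radial_integral_y, HH.
    + apply cont2_radial_integral, smooth_cont2, HH.
Qed.

Definition divX (G : R -> R -> R) (x y : R) : R :=
  if Req_EM_T x 0 then dX G 0 y else G x y / x.

Lemma divX_radial_integral G x y : smooth G -> (forall y, G 0 y = 0) ->
  divX G x y = radial_integral 0 (dX G) x y.
Proof.
  intros HG HG0. unfold divX, radial_integral.
  destruct (Req_EM_T x 0) as [->|Hx].
  - rewrite (RInt_ext _ (fun _ => dX G 0 y)) by (intros t _; simpl; rewrite Rmult_0_r; ring).
    rewrite RInt_const. unfold scal; simpl; unfold mult; simpl. ring.
  - assert (D : forall t, is_derive (fun s => G (s * x) y) t (x * dX G (t * x) y)).
    { intros t. apply (is_derive_comp (fun z => G z y) (fun s => s * x)).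
      - apply is_derive_dX, HG.
      - auto_derive; [exact I | ring]. }
    assert (FTC : RInt (fun t => x * dX G (t * x) y) 0 1 = G x y).
    { rewrite (RInt_ext _ (Derive (fun s => G (s * x) y)))
        by (intros t _; symmetry; apply is_derive_unique, D).
      rewrite RInt_Derive.
      - rewrite Rmult_0_l, Rmult_1_l, HG0. apply Rminus_0_r.
      - intros t _. eexists. apply D.
      - intros t _. apply continuous_ext with (fun s => x * dX G (s * x) y).
        + intros s. symmetry. apply is_derive_unique, D.
        + apply (continuous_mult (fun _ => x)); [apply continuous_const|].
          apply (cont2_comp (dX G)); [apply smooth_cont2, smooth_dX, HG | | apply continuous_const].
          apply (ex_derive_continuous (fun s => s * x)). auto_derive. exact I. }
    rewrite <- FTC.
    rewrite (RInt_ext _ (fun t => scal x (t ^ 0 * dX G (t * x) y)))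
      by (intros t _; unfold scal; simpl; unfold mult; simpl; ring).
    rewrite (RInt_scal (V := R_CompleteNormedModule));
      [|apply ex_RInt_radial_integrand, smooth_cont2, smooth_dX, HG].
    unfold scal; simpl; unfold mult; simpl. field. exact Hx.
Qed.

Lemma smooth_divX G : smooth G -> (forall y, G 0 y = 0) -> smooth (divX G).
Proof.
  intros HG HG0.
  apply (smooth_ext (radial_integral 0 (dX G))).
  - intros x y. symmetry. apply divX_radial_integral; assumption.
  - apply smooth_radial_integral, smooth_dX, HG.
Qed.

Lemma smooth_comp_phi b1 b2 h : smooth h ->
  smooth (fun S1 S2 => h (fst (phi b1 b2 S1 S2)) (snd (phi b1 b2 S1 S2))).
Proof.
  intros Hh. apply (smooth_ext (fun S1 S2 => h (b1 * S1 + b2 * S2 + 0) (-1 * S1 + -1 * S2 + 1))).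
  - intros S1 S2. unfold phi; simpl. f_equal; ring.
  - apply smooth_comp_affine, Hh.
Qed.

Lemma smooth_comp_phi_inv b1 b2 h : smooth h ->
  smooth (fun X I => h (fst (phi_inv b1 b2 X I)) (snd (phi_inv b1 b2 X I))).
Proof.
  intros Hh. set (d := / (b1 - b2)).
  apply (smooth_ext (fun X I => h (d * X + b2 * d * I + - b2 * d) (- d * X + - b1 * d * I + b1 * d))).
  - intros X I. unfold phi_inv, d, Rdiv; simpl. f_equal; ring.
  - apply smooth_comp_affine, Hh.
Qed.

Lemma smooth_fst_phi_inv b1 b2 : smooth (fun X I => fst (phi_inv b1 b2 X I)).
Proof. exact (smooth_comp_phi_inv b1 b2 (fun x _ => x) smooth_fst). Qed.

Lemma smooth_snd_phi_inv b1 b2 : smooth (fun X I => snd (phi_inv b1 b2 X I)).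
Proof. exact (smooth_comp_phi_inv b1 b2 (fun _ y => y) smooth_snd). Qed.

Ltac solve_smooth :=
  repeat match goal with
  | |- smooth (fun _ _ => _) => apply smooth_const
  | |- smooth (fun x _ => x) => apply smooth_fst
  | |- smooth (fun _ y => y) => apply smooth_snd
  | |- smooth (fun x y => fst (phi_inv _ _ x y)) => apply smooth_fst_phi_inv
  | |- smooth (fun x y => snd (phi_inv _ _ x y)) => apply smooth_snd_phi_inv
  | |- smooth (fun x y => _ (fst (phi_inv _ _ x y)) (snd (phi_inv _ _ x y))) =>
      apply smooth_comp_phi_inv
  | |- smooth (fun x y => _ (fst (phi _ _ x y)) (snd (phi _ _ x y))) => apply smooth_comp_phi
  | |- smooth (fun x y => _ + _) => apply smooth_plus
  | |- smooth (fun x y => _ - _) => apply smooth_minus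
  | |- smooth (fun x y => - _) => apply smooth_opp
  | |- smooth (fun x y => _ * _) => apply smooth_mult
  | |- smooth (fun x y => _ / _) => apply smooth_div_const
  | |- smooth _ => assumption
  end.

Lemma phi_phi_inv b1 b2 X I : b1 <> b2 ->
  phi b1 b2 (fst (phi_inv b1 b2 X I)) (snd (phi_inv b1 b2 X I)) = (X, I).
Proof. intros hb. unfold phi, phi_inv; simpl. f_equal; field; lra. Qed.

Lemma phi_inv_phi b1 b2 S1 S2 : b1 <> b2 ->
  phi_inv b1 b2 (fst (phi b1 b2 S1 S2)) (snd (phi b1 b2 S1 S2)) = (S1, S2).
Proof. intros hb. unfold phi, phi_inv; simpl. f_equal; field; lra. Qed.

Lemma Psigma_phi_inv b1 b2 X I : b1 <> b2 -> Pcal X I ->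
  Psigma (fst (phi_inv b1 b2 X I)) (snd (phi_inv b1 b2 X I)).
Proof.
  intros hb HI. unfold Pcal, Psigma, phi_inv in *; simpl.
  replace ((X - b2 * (1 - I)) / (b1 - b2) + (b1 * (1 - I) - X) / (b1 - b2)) with (1 - I)
    by (field; lra).
  lra.
Qed.

Lemma Pcal_phi b1 b2 S1 S2 : Psigma S1 S2 -> Pcal (fst (phi b1 b2 S1 S2)) (snd (phi b1 b2 S1 S2)).
Proof. unfold Pcal, Psigma, phi; simpl. lra. Qed.

Lemma push_phi b1 b2 F X I :
  push b1 b2 F X I =
  let v := F (fst (phi_inv b1 b2 X I)) (snd (phi_inv b1 b2 X I)) in
  (b1 * fst v + b2 * snd v, - (fst v + snd v)).
Proof.
  unfold push. destruct (phi_inv b1 b2 X I) as [S1 S2]. simpl.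
  destruct (F S1 S2) as [v1 v2]. unfold phi; simpl.
  f_equal; apply is_derive_unique; auto_derive; auto; ring.
Qed.

Lemma push_Ffield b1 b2 Om1 Om2 g1 g2 : b1 <> b2 -> g1 + g2 = 1 ->
  push b1 b2 (Ffield b1 b2 Om1 Om2 g1 g2) = Vfield (f_of b1 b2 Om1 Om2 g1 g2).
Proof.
  intros hb hg. do 2 (apply functional_extensionality; intro). rewrite push_phi.
  unfold Ffield, Vfield, f_of, P_of, Q_of, lam_of, phi_inv; simpl.
  replace g2 with (1 - g1) by lra.
  f_equal; field; lra.
Qed.

Lemma eq_on_push b1 b2 (F F' : vfield) : b1 <> b2 ->
  eq_on Psigma F F' <-> eq_on Pcal (push b1 b2 F) (push b1 b2 F').
Proof.
  intros hb. split.
  - intros E X I HI. rewrite !push_phi. cbv zeta.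
    rewrite E by (apply Psigma_phi_inv; assumption). reflexivity.
  - intros E S1 S2 HS. specialize (E _ _ (Pcal_phi b1 b2 S1 S2 HS)).
    rewrite !push_phi, phi_inv_phi in E by exact hb. simpl in E.
    destruct (F S1 S2) as [v1 v2], (F' S1 S2) as [w1 w2]. simpl in E.
    injection E as E1 E2.
    assert (Ev1 : v1 = w1).
    { apply Rmult_eq_reg_l with (b1 - b2); [nra | lra]. }
    f_equal; lra.
Qed.

Lemma eq_on_Vfield D (f f' : R -> R -> R) : eq_on D (Vfield f) (Vfield f') <-> eq_on D f f'.
Proof.
  split; intros E x y Hxy.
  - injection (E x y Hxy). auto.
  - unfold Vfield. rewrite (E x y Hxy). reflexivity.
Qed.

Lemma P_of_eq_on b1 b2 Om1 Om2 h1 h2 : b1 <> b2 ->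
  eq_on Psigma Om1 h1 -> eq_on Psigma Om2 h2 ->
  eq_on Pcal (P_of b1 b2 Om1 Om2) (P_of b1 b2 h1 h2).
Proof.
  intros hb E1 E2 X I HI. unfold P_of. cbv zeta.
  rewrite E1, E2 by (apply Psigma_phi_inv; assumption). reflexivity.
Qed.

Lemma Q_of_eq_on b1 b2 Om1 Om2 h1 h2 : b1 <> b2 ->
  eq_on Psigma Om1 h1 -> eq_on Psigma Om2 h2 ->
  eq_on Pcal (Q_of b1 b2 Om1 Om2) (Q_of b1 b2 h1 h2).
Proof.
  intros hb E1 E2 X I HI. unfold Q_of. cbv zeta.
  rewrite E1, E2 by (apply Psigma_phi_inv; assumption). reflexivity.
Qed.

Lemma smooth_P_of b1 b2 h1 h2 : smooth h1 -> smooth h2 -> smooth (P_of b1 b2 h1 h2).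
Proof. intros H1 H2. unfold P_of. cbv zeta. solve_smooth. Qed.

Lemma smooth_Q_of b1 b2 h1 h2 : smooth h1 -> smooth h2 -> smooth (Q_of b1 b2 h1 h2).
Proof. intros H1 H2. unfold Q_of. cbv zeta. solve_smooth. Qed.

Lemma smooth_on_P_of b1 b2 Om1 Om2 : b1 <> b2 ->
  smooth_on Psigma Om1 -> smooth_on Psigma Om2 -> smooth_on Pcal (P_of b1 b2 Om1 Om2).
Proof.
  intros hb [h1 [H1 E1]] [h2 [H2 E2]]. exists (P_of b1 b2 h1 h2).
  split; [apply smooth_P_of; assumption | apply P_of_eq_on; assumption].
Qed.

Lemma smooth_on_Q_of b1 b2 Om1 Om2 : b1 <> b2 ->
  smooth_on Psigma Om1 -> smooth_on Psigma Om2 -> smooth_on Pcal (Q_of b1 b2 Om1 Om2).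
Proof.
  intros hb [h1 [H1 E1]] [h2 [H2 E2]]. exists (Q_of b1 b2 h1 h2).
  split; [apply smooth_Q_of; assumption | apply Q_of_eq_on; assumption].
Qed.

Lemma smooth_on_f_of b1 b2 Om1 Om2 g1 g2 : b1 <> b2 -> admissible Om1 Om2 g1 g2 ->
  smooth_on Pcal (f_of b1 b2 Om1 Om2 g1 g2).
Proof.
  intros hb [HO1 [HO2 _]].
  destruct (smooth_on_P_of b1 b2 Om1 Om2 hb HO1 HO2) as [p [Hp Ep]].
  destruct (smooth_on_Q_of b1 b2 Om1 Om2 hb HO1 HO2) as [q [Hq Eq]].
  exists (fun X I => lam_of b1 b2 g1 g2 * I + (1 - I) * p X I + X * q X I). split.
  - solve_smooth.
  - intros X I HI. unfold f_of. rewrite Ep, Eq by exact HI. reflexivity.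
Qed.

Lemma locally_1_nonneg : locally 1 (fun t => 0 <= t).
Proof.
  apply (filter_imp (fun t => 0 < t)); [intros; lra|].
  apply (open_gt 0 1 Rlt_0_1).
Qed.

Lemma smooth_on_Q_f f : smooth_on Pcal f -> smooth_on Pcal (Q_f f).
Proof.
  intros [h [Hh E]].
  exists (divX (fun x y => h x y - h 0 y)). split.
  - apply smooth_divX; [|intros; ring].
    apply smooth_minus; [exact Hh|].
    apply (smooth_ext (fun x y => h (0 * x + 0 * y + 0) (0 * x + 1 * y + 0)));
      [intros; f_equal; ring | apply smooth_comp_affine, Hh].
  - intros X I HI. unfold Q_f, divX, dX.
    destruct (Req_EM_T X 0) as [->|HX].
    + rewrite (Derive_ext _ (fun t => h t I)) by (intros t; apply E, HI).
      rewrite Derive_minus, Derive_const, Rminus_0_r; [reflexivity | | apply ex_derive_const].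
      exact (proj1 (smooth_ex_derive h Hh 0 I)).
    + rewrite !E by exact HI. reflexivity.
Qed.

Lemma smooth_on_P_f f : smooth_on Pcal f -> smooth_on Pcal (fun _ I => P_f f I).
Proof.
  intros [h [Hh E]].
  (* P_f f I is the difference quotient of G at u = 1 - I *)
  set (G := fun u _ : R => h 0 (1 - u) - h 0 1 * (1 - u)).
  exists (fun _ I => divX G (1 - I) 0). split.
  - apply (smooth_ext (fun X I => divX G (0 * X + -1 * I + 1) (0 * X + 0 * I + 0)));
      [intros; f_equal; ring|].
    apply smooth_comp_affine, smooth_divX; [|intros; unfold G; rewrite Rminus_0_r; ring].
    unfold G. apply smooth_minus.
    + apply (smooth_ext (fun x y => h (0 * x + 0 * y + 0) (-1 * x + 0 * y + 1)));
        [intros; f_equal; ring | apply smooth_comp_affine, Hh].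
    + solve_smooth.
  - intros X I HI. unfold P_f, divX.
    destruct (Req_EM_T I 1) as [->|HI1].
    + rewrite Rminus_diag. destruct (Req_EM_T 0 0) as [_|]; [|contradiction].
      assert (Df : dY f 0 1 = dY h 0 1).
      { apply is_derive_unique, (is_derive_ext_loc (fun t => h 0 t)); [|apply is_derive_dY, Hh].
        apply (filter_imp (fun t => 0 <= t)); [|apply locally_1_nonneg].
        intros t Ht. symmetry. apply E, Ht. }
      assert (DG : dX G 0 0 = h 0 1 - dY h 0 1).
      { apply is_derive_unique. unfold G. auto_derive.
        - exact (proj2 (smooth_ex_derive h Hh 0 _)).
        - unfold dY. rewrite Ropp_0, Rplus_0_r. ring. }
      rewrite Df, DG, E by (unfold Pcal; lra). reflexivity.
    + destruct (Req_EM_T (1 - I) 0) as [|_]; [lra|].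
      unfold G. replace (1 - (1 - I)) with I by ring.
      rewrite !E by (unfold Pcal in *; lra). reflexivity.
Qed.

Lemma smooth_on_Om_f_shape b1 b2 f b c : smooth_on Pcal f ->
  smooth_on Psigma (fun S1 S2 => let q := phi b1 b2 S1 S2 in
    (P_f f (snd q) + b * Q_f f (fst q) (snd q) + b ^ 2 * snd q) / c).
Proof.
  intros Hf.
  destruct (smooth_on_P_f f Hf) as [p [Hp Ep]], (smooth_on_Q_f f Hf) as [q [Hq Eq]].
  exists (fun S1 S2 => (p (fst (phi b1 b2 S1 S2)) (snd (phi b1 b2 S1 S2))
                        + b * q (fst (phi b1 b2 S1 S2)) (snd (phi b1 b2 S1 S2))
                        + b ^ 2 * (1 - S1 - S2)) / c).
  split.
  - solve_smooth.
  - intros S1 S2 HS. cbv zeta.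
    rewrite <- Ep, <- Eq by (apply Pcal_phi, HS). reflexivity.
Qed.

Lemma admissible_Om_f b1 b2 f : b1 <> b2 -> smooth_on Pcal f ->
  admissible (Om1_f b1 b2 f) (Om2_f b1 b2 f) (g1_f b1 b2 f) (g2_f b1 b2 f).
Proof.
  intros hb Hf. split; [|split].
  - exact (smooth_on_Om_f_shape b1 b2 f b1 (b2 - b1) Hf).
  - exact (smooth_on_Om_f_shape b1 b2 f b2 (b1 - b2) Hf).
  - unfold g1_f, g2_f. field. lra.
Qed.

Lemma P_of_Om_f b1 b2 f X I : b1 <> b2 ->
  P_of b1 b2 (Om1_f b1 b2 f) (Om2_f b1 b2 f) X I = P_f f I.
Proof.
  intros hb. unfold P_of, Om1_f, Om2_f. cbv zeta. rewrite phi_phi_inv by exact hb.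
  unfold phi_inv; simpl. field. lra.
Qed.

Lemma Q_of_Om_f b1 b2 f X I : b1 <> b2 ->
  Q_of b1 b2 (Om1_f b1 b2 f) (Om2_f b1 b2 f) X I = Q_f f X I.
Proof.
  intros hb. unfold Q_of, Om1_f, Om2_f. cbv zeta. rewrite phi_phi_inv by exact hb.
  unfold phi_inv; simpl. field. lra.
Qed.

Lemma f_of_Om_f b1 b2 f X I : b1 <> b2 ->
  f_of b1 b2 (Om1_f b1 b2 f) (Om2_f b1 b2 f) (g1_f b1 b2 f) (g2_f b1 b2 f) X I = f X I.
Proof.
  intros hb. unfold f_of. rewrite P_of_Om_f, Q_of_Om_f by exact hb.
  replace (lam_of b1 b2 (g1_f b1 b2 f) (g2_f b1 b2 f)) with (f 0 1)
    by (unfold lam_of, g1_f, g2_f, lam_f; field; lra).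
  unfold P_f, Q_f.
  destruct (Req_EM_T I 1) as [->|HI]; destruct (Req_EM_T X 0) as [->|HX].
  - ring.
  - field. exact HX.
  - field. lra.
  - field. split; [exact HX | lra].
Qed.

Lemma Q_f_linear_in_X f (A : R -> R) q : smooth_on Pcal q ->
  (forall X I, 0 <= I -> f X I = A I + X * q X I) ->
  forall X I, 0 <= I -> Q_f f X I = q X I.
Proof.
  intros [h [Hh E]] Hf X I HI. unfold Q_f.
  destruct (Req_EM_T X 0) as [->|HX].
  - unfold dX. rewrite E by exact HI.
    rewrite (Derive_ext _ (fun t => A I + t * h t I))
      by (intros t; rewrite Hf, E by exact HI; reflexivity).
    apply is_derive_unique. auto_derive.
    + exact (proj1 (smooth_ex_derive h Hh _ I)).
    + ring.
  - rewrite !Hf by exact HI. field. exact HX.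
Qed.

Lemma P_f_affine_in_I f lam p : smooth_on Pcal p ->
  (forall I, 0 <= I -> f 0 I = lam * I + (1 - I) * p 0 I) ->
  forall I, 0 <= I -> P_f f I = p 0 I.
Proof.
  intros [h [Hh E]] Hf I HI. unfold P_f.
  assert (Hf1 : f 0 1 = lam) by (rewrite Hf by lra; ring).
  destruct (Req_EM_T I 1) as [->|HI1].
  - assert (D : dY f 0 1 = lam - h 0 1).
    { apply is_derive_unique.
      apply (is_derive_ext_loc (fun t => lam * t + (1 - t) * h 0 t)).
      - apply (filter_imp (fun t => 0 <= t)); [|apply locally_1_nonneg].
        intros t Ht. rewrite Hf, E by exact Ht. reflexivity.
      - auto_derive; [exact (proj2 (smooth_ex_derive h Hh 0 1)) | ring]. }
    rewrite D, Hf1, E by (unfold Pcal; lra). ring.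
  - rewrite Hf, Hf1 by exact HI. field. lra.
Qed.

Section Uniqueness.

Variables (b1 b2 : R) (f Om1 Om2 : R -> R -> R) (g1 g2 : R).
Hypotheses (hb : b1 <> b2) (Hadm : admissible Om1 Om2 g1 g2)
  (Hind : P_indep_X b1 b2 Om1 Om2)
  (Hpush : eq_on Pcal (push b1 b2 (Ffield b1 b2 Om1 Om2 g1 g2)) (Vfield f)).

Let lam := lam_of b1 b2 g1 g2.

Lemma f_eq_f_of : eq_on Pcal f (f_of b1 b2 Om1 Om2 g1 g2).
Proof.
  destruct Hadm as [_ [_ hg]].
  pose proof Hpush as E. rewrite push_Ffield in E by assumption. apply eq_on_Vfield in E.
  intros X I HI. symmetry. apply E, HI.
Qed.

Lemma f_decomposition X I : Pcal X I ->
  f X I = lam * I + (1 - I) * P_of b1 b2 Om1 Om2 0 I + X * Q_of b1 b2 Om1 Om2 X I.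
Proof.
  intros HI. rewrite f_eq_f_of by exact HI. unfold f_of.
  rewrite (Hind X 0 I) by exact HI. reflexivity.
Qed.

Lemma Q_f_eq_Q_of : eq_on Pcal (Q_f f) (Q_of b1 b2 Om1 Om2).
Proof.
  destruct Hadm as [HO1 [HO2 _]].
  intros X I. apply (Q_f_linear_in_X f (fun I => lam * I + (1 - I) * P_of b1 b2 Om1 Om2 0 I)).
  - apply smooth_on_Q_of; assumption.
  - intros; apply f_decomposition; assumption.
Qed.

Lemma P_f_eq_P_of X I : Pcal X I -> P_f f I = P_of b1 b2 Om1 Om2 X I.
Proof.
  destruct Hadm as [HO1 [HO2 _]].
  intros HI. rewrite (Hind X 0 I) by exact HI. revert I HI.
  apply (P_f_affine_in_I f lam).
  - apply smooth_on_P_of; assumption.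
  - intros I HI. rewrite f_decomposition by exact HI. ring.
Qed.

Lemma lam_f_eq : lam_f f = lam.
Proof.
  unfold lam_f. rewrite f_decomposition by (unfold Pcal; lra). ring.
Qed.

Lemma parameters_unique :
  eq_on Psigma Om1 (Om1_f b1 b2 f) /\ eq_on Psigma Om2 (Om2_f b1 b2 f)
  /\ g1 = g1_f b1 b2 f /\ g2 = g2_f b1 b2 f.
Proof.
  destruct Hadm as [_ [_ hg]].
  assert (HPQ : forall S1 S2, Psigma S1 S2 ->
            P_f f (snd (phi b1 b2 S1 S2))
            = b1 * Om2 S1 S2 + b2 * Om1 S1 S2 + b1 * b2 * (1 - S1 - S2)
            /\ Q_f f (fst (phi b1 b2 S1 S2)) (snd (phi b1 b2 S1 S2))
            = - (Om1 S1 S2 + Om2 S1 S2 + (b1 + b2) * (1 - S1 - S2))).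
  { intros S1 S2 HS.
    rewrite (P_f_eq_P_of _ _ (Pcal_phi b1 b2 S1 S2 HS)), (Q_f_eq_Q_of _ _ (Pcal_phi b1 b2 S1 S2 HS)).
    unfold P_of, Q_of. cbv zeta. rewrite phi_inv_phi by exact hb. split; reflexivity. }
  split; [|split; [|split]].
  - intros S1 S2 HS. unfold Om1_f. cbv zeta. destruct (HPQ S1 S2 HS) as [-> ->].
    simpl. field. lra.
  - intros S1 S2 HS. unfold Om2_f. cbv zeta. destruct (HPQ S1 S2 HS) as [-> ->].
    simpl. field. lra.
  - unfold g1_f. rewrite lam_f_eq. unfold lam, lam_of. field_simplify_eq; [nra | lra].
  - unfold g2_f. rewrite lam_f_eq. unfold lam, lam_of. field_simplify_eq; [nra | lra].
Qed.

End Uniqueness.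

Theorem theorem3p8 (b1 b2 : R) (hb : b2 < b1) :
  (* (i) *)
  (forall (Om1 Om2 : R -> R -> R) (g1 g2 : R),
     admissible Om1 Om2 g1 g2 ->
     eq_on Pcal (push b1 b2 (Ffield b1 b2 Om1 Om2 g1 g2))
                (Vfield (f_of b1 b2 Om1 Om2 g1 g2)))
  /\
  (* (ii) F_(Omega,gamma) |-> f is a well-defined bijection onto C^oo(Pcal) *)
  ((forall (Om1 Om2 : R -> R -> R) (g1 g2 : R),
      admissible Om1 Om2 g1 g2 -> smooth_on Pcal (f_of b1 b2 Om1 Om2 g1 g2))
   /\ (forall (Om1 Om2 Om1' Om2' : R -> R -> R) (g1 g2 g1' g2' : R),
      admissible Om1 Om2 g1 g2 -> admissible Om1' Om2' g1' g2' ->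
      (eq_on Psigma (Ffield b1 b2 Om1 Om2 g1 g2) (Ffield b1 b2 Om1' Om2' g1' g2')
       <-> eq_on Pcal (f_of b1 b2 Om1 Om2 g1 g2) (f_of b1 b2 Om1' Om2' g1' g2')))
   /\ (forall f : R -> R -> R, smooth_on Pcal f ->
      exists (Om1 Om2 : R -> R -> R) (g1 g2 : R),
        admissible Om1 Om2 g1 g2 /\ eq_on Pcal (f_of b1 b2 Om1 Om2 g1 g2) f))
  /\
  (* (iii) *)
  (forall f : R -> R -> R, smooth_on Pcal f ->
     (admissible (Om1_f b1 b2 f) (Om2_f b1 b2 f) (g1_f b1 b2 f) (g2_f b1 b2 f)
      /\ P_indep_X b1 b2 (Om1_f b1 b2 f) (Om2_f b1 b2 f)
      /\ eq_on Pcal (push b1 b2 (Ffield b1 b2 (Om1_f b1 b2 f) (Om2_f b1 b2 f)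
                                        (g1_f b1 b2 f) (g2_f b1 b2 f)))
                    (Vfield f))
     /\ (forall (Om1 Om2 : R -> R -> R) (g1 g2 : R),
           admissible Om1 Om2 g1 g2 ->
           P_indep_X b1 b2 Om1 Om2 ->
           eq_on Pcal (push b1 b2 (Ffield b1 b2 Om1 Om2 g1 g2)) (Vfield f) ->
           eq_on Psigma Om1 (Om1_f b1 b2 f) /\ eq_on Psigma Om2 (Om2_f b1 b2 f)
           /\ g1 = g1_f b1 b2 f /\ g2 = g2_f b1 b2 f)).
Proof.
  assert (hb' : b1 <> b2) by lra.
  split; [|split; [split; [|split]|]].
  - intros Om1 Om2 g1 g2 [_ [_ hg]]. rewrite push_Ffield by assumption. intros X I _. reflexivity.
  - intros Om1 Om2 g1 g2. apply smooth_on_f_of, hb'.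
  - intros Om1 Om2 Om1' Om2' g1 g2 g1' g2' [_ [_ hg]] [_ [_ hg']].
    rewrite (eq_on_push b1 b2 _ _ hb'), !push_Ffield by assumption. apply eq_on_Vfield.
  - intros f Hf. exists (Om1_f b1 b2 f), (Om2_f b1 b2 f), (g1_f b1 b2 f), (g2_f b1 b2 f).
    split; [apply admissible_Om_f; assumption|].
    intros X I _. apply f_of_Om_f, hb'.
  - intros f Hf. pose proof (admissible_Om_f b1 b2 f hb' Hf) as Hadm.
    split; [split; [exact Hadm | split]|].
    + intros X X' I _. rewrite !P_of_Om_f by exact hb'. reflexivity.
    + destruct Hadm as [_ [_ hg]]. rewrite push_Ffield by assumption.
      apply eq_on_Vfield. intros X I _. apply f_of_Om_f, hb'.
    + intros Om1 Om2 g1 g2 Hadm' Hind Hpush. apply parameters_unique; assumption.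
Qed.
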